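(* Let $(G,R,\omega)$ be a metric RPP instance and let $c$ be the number of connected components of $G\langle R\rangle$. For every edge-minimizing Eulerian extension $S$, at most $2c-2$ vertices that are balanced in $G\langle R\rangle$ are incident to edges of $S$. The bound is tight: for every $c\ge 1$ there is a metric RPP instance with $c$ components and an edge-minimizing Eulerian extension $S$ such that exactly $2c-2$ balanced vertices of $G\langle R\rangle$ are incident to edges of $S$.
   Context: An RPP instance is a triple $(G,R,\omega)$, where $G=(V,E)$ is an undirected multigraph, $\omega\colon E\to\mathbb{N}$ assigns weights (parallel edges have equal weight), and $R$ is a nonempty multiset of edges of $G$. The instance is metric if $G$ contains an edge between any two vertices and the weights satisfy the triangle inequality $\omega(\{u,w\})\le\omega(\{u,v\})+\omega(\{v,w\})$ for all $u,v,w\in V$. For a multiset $X$ of edges: - $\omega(X)$ and $|X|$ are the weight and cardinality counted with multiplicity; - $V(X)$ is the set of vertices incident to edges of $X$; - $G\langle X\rangle=(V(X),X)$ is the multigraph formed by $X$ (no isolated vertices); - $\uplus$ denotes multiset sum. A vertex is balanced in a multigraph if its degree is even (a loop counts 2), and imbalanced otherwise. A multigraph without isolated vertices is Eulerian if it is connected and all vertices are balanced. An Eulerian extension for $(G,R,\omega)$ is a multiset $S$ of edges of $G$ such that $G\langle R\uplus S\rangle$ is Eulerian. It is edge-minimizing if there is no Eulerian extension $S'$ with $|S'|<|S|$ and $\omega(S')\le\omega(S)$. *)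

From mathcomp Require Import all_boot.
Set Implicit Arguments. Unset Strict Implicit. Unset Printing Implicit Defensive.

(* An undirected multigraph G = (V, E): V a finite vertex type, E a type of
   edge identifiers, [ends e] the (unordered) pair of endpoints of e
   (a loop when both coincide), [w e] its weight.  Multisets of edges are
   sequences of edge identifiers (order irrelevant). *)
Section RPP.
Variables (V : finType) (E : eqType) (ends : E -> V * V) (w : E -> nat).

Definition joins (e : E) (u v : V) : bool :=
  (ends e == (u, v)) || (ends e == (v, u)).

Definition incident (e : E) (v : V) : bool :=
  ((ends e).1 == v) || ((ends e).2 == v).

Definition weight (X : seq E) : nat := \sum_(e <- X) w e.

(* degree in G<X>; a loop counts 2 *)
Definition deg (X : seq E) (v : V) : nat :=
  \sum_(e <- X) (((ends e).1 == v) + ((ends e).2 == v)).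

Definition VX (X : seq E) : {set V} := [set v | has (incident^~ v) X].

Definition adj (X : seq E) : rel V := fun u v => has (fun e => joins e u v) X.

Definition balanced (X : seq E) (v : V) : bool := ~~ odd (deg X v).

Definition connectedX (X : seq E) : Prop :=
  forall u v, u \in VX X -> v \in VX X -> connect (adj X) u v.

Definition eulerian (X : seq E) : Prop :=
  connectedX X /\ forall v, v \in VX X -> balanced X v.

Definition ncomp (X : seq E) : nat :=
  #|[set [set y in VX X | connect (adj X) x y] | x in VX X]|.

Definition parallel_eq_weight : Prop :=
  forall e f, joins e (ends f).1 (ends f).2 -> w e = w f.

Definition metric : Prop :=
  (forall u v, u != v -> exists e, joins e u v) /\
  (forall u v x e1 e2 e3, joins e1 u x -> joins e2 u v -> joins e3 v x ->
      w e1 <= w e2 + w e3).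

Definition eulerian_extension (R S : seq E) : Prop := eulerian (R ++ S).

Definition edge_minimizing (R S : seq E) : Prop :=
  eulerian_extension R S /\
  ~ (exists S', eulerian_extension R S' /\ size S' < size S /\ weight S' <= weight S).

Definition balanced_touched (R S : seq E) : {set V} :=
  [set v | [&& v \in VX R, balanced R v & v \in VX S]].

End RPP.

From Pilot Require Import Defs.
From mathcomp Require Import all_boot zify.
Set Implicit Arguments. Unset Strict Implicit. Unset Printing Implicit Defensive.

(* If two edges of [S] meet at a vertex [v] of even [S]-degree, replacing them by the edge
   joining their other ends gives, by the triangle inequality, a smaller extension that is
   no heavier and keeps all degrees even.  For an edge-minimizing [S] this must disconnect
   [V(R)], i.e. the [S]-edges at [v] are needed for connectivity.  For [v] outside [V(R)]
   a second shortcut restores connectivity, so [S] has no such vertices; for [v] balanced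
   in [G<R>] it means that [v] is an endpoint of every [T ⊆ S] connecting the same
   components as [S].  Choosing [T] as a spanning forest of the [c] components of [G<R>]
   gives [|T| <= c - 1], hence at most [2c - 2] such vertices. *)

Section Multigraph.
Variables (V : finType) (E : eqType) (ends : E -> V * V) (w : E -> nat).

Local Notation joins := (joins ends).
Local Notation incident := (incident ends).
Local Notation deg := (deg ends).
Local Notation VX := (VX ends).
Local Notation adj := (adj ends).
Local Notation balanced := (balanced ends).
Local Notation eulerian := (eulerian ends).
Local Notation weight := (weight w).

Definition even_graph (X : seq E) : Prop := forall v, balanced X v.

Definition connects (D : {set V}) (X : seq E) : Prop :=
  {in D &, forall a b, connect (adj X) a b}.

Lemma joins_sym e u v : joins e u v = joins e v u.
Proof. by rewrite /Defs.joins orbC. Qed.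

Lemma joins_ends e : joins e (ends e).1 (ends e).2.
Proof. by rewrite /Defs.joins -surjective_pairing eqxx. Qed.

Lemma joinsP e u v : joins e u v ->
  ((ends e).1 = u /\ (ends e).2 = v) \/ ((ends e).1 = v /\ (ends e).2 = u).
Proof. by case/orP=> /eqP ->; [left | right]. Qed.

Lemma joins_incident e u v : joins e u v -> incident e u.
Proof. by rewrite /Defs.incident; case/joinsP => -[-> ->]; rewrite eqxx ?orbT. Qed.

Lemma incident_joins e v : incident e v -> exists u, joins e v u.
Proof.
case/orP=> /eqP <-; first by exists (ends e).2; rewrite joins_ends.
by exists (ends e).1; rewrite joins_sym joins_ends.
Qed.

Lemma joins_inj e z u u' : joins e z u -> joins e z u' -> u = u'.
Proof. by case/joinsP => -[h1 h2]; case/joinsP => -[h3 h4]; congruence. Qed.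

Lemma inVX X v : (v \in VX X) = has (incident^~ v) X.
Proof. by rewrite inE. Qed.

Lemma VX_catl X Y v : v \in VX X -> v \in VX (X ++ Y).
Proof. by rewrite !inVX has_cat => ->. Qed.

Lemma VX_double X : VX (X ++ X) = VX X.
Proof. by apply/setP => v; rewrite !inVX has_cat orbb. Qed.

Lemma card_VX X : #|VX X| <= 2 * size X.
Proof.
elim: X => [|e X IH]; first by rewrite leqn0 cards_eq0; apply/eqP/setP => v; rewrite !inE.
have -> : VX (e :: X) = [set (ends e).1; (ends e).2] :|: VX X.
  by apply/setP => v; rewrite !inE /= /Defs.incident ![v == _]eq_sym.
by apply: leq_trans (leq_card_setU _ _).1 _; rewrite cards2 /=; case: (_ != _); lia.
Qed.

Lemma deg_cat X Y v : deg (X ++ Y) v = deg X v + deg Y v.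
Proof. exact: big_cat. Qed.

Lemma deg_perm X Y v : perm_eq X Y -> deg X v = deg Y v.
Proof. exact: perm_big. Qed.

Lemma deg_seq1 e u v y : joins e u v -> deg [:: e] y = (u == y) + (v == y).
Proof. by rewrite /Defs.deg big_seq1; case/joinsP => -[-> ->]; rewrite // addnC. Qed.

Lemma deg_gt0 X v : (0 < deg X v) = (v \in VX X).
Proof.
rewrite inVX; elim: X => [|e X IH]; first by rewrite /Defs.deg big_nil.
rewrite -cat1s deg_cat addn_gt0 IH /= /Defs.deg big_seq1 /Defs.incident.
by case: (_ == v); case: (_ == v).
Qed.

Lemma deg_notVX X v : v \notin VX X -> deg X v = 0.
Proof. by rewrite -deg_gt0 lt0n negbK => /eqP. Qed.

Lemma deg_filter p X v : (forall e, e \in X -> ~~ p e -> ~~ incident e v) ->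
  deg (filter p X) v = deg X v.
Proof.
move=> hX; rewrite /Defs.deg big_filter big_mkcond; apply: eq_big_seq => e eX.
case: ifP => // /negbT /(hX e eX); rewrite /Defs.incident negb_or.
by case/andP => /negbTE -> /negbTE ->.
Qed.

Lemma balanced_double X v : balanced (X ++ X) v.
Proof. by rewrite /Defs.balanced deg_cat addnn odd_double. Qed.

Lemma eulerian_even X : eulerian X -> even_graph X.
Proof.
move=> [_ hb] v; case: (boolP (v \in VX X)) => [/hb // | vX].
by rewrite /Defs.balanced deg_notVX.
Qed.

Lemma weight_cons e X : weight (e :: X) = w e + weight X.
Proof. exact: big_cons. Qed.

Lemma weight_perm X Y : perm_eq X Y -> weight X = weight Y.
Proof. exact: perm_big. Qed.

Lemma weight_filter p X : weight (filter p X) <= weight X.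
Proof.
elim: X => [|e X IH] //=; case: (p e); rewrite !weight_cons ?leq_add2l //.
exact: leq_trans IH (leq_addl _ _).
Qed.

Lemma weight_eq0 X : weight X = 0 -> {in X, forall e, w e = 0}.
Proof. by move/eqP; rewrite sum_nat_seq_eq0 => /allP h e /h /eqP. Qed.

Lemma adj_sym X : symmetric (adj X).
Proof. by move=> u v; apply: eq_has => e; rewrite joins_sym. Qed.

Lemma connect_adj_sym X : connect_sym (adj X).
Proof. exact/sym_connect_sym/adj_sym. Qed.

Lemma adjP X u v : reflect (exists2 e, e \in X & joins e u v) (adj X u v).
Proof. exact: hasP. Qed.

Lemma adj_edge X e u v : e \in X -> joins e u v -> adj X u v.
Proof. by move=> eX j; apply/adjP; exists e. Qed.

Lemma sub_connect_adj X Y : {subset X <= Y} -> subrel (connect (adj X)) (connect (adj Y)).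
Proof.
move=> XY; apply: connect_sub => u v /adjP [e /XY eY j].
by apply: connect1; apply: adj_edge eY j.
Qed.

Lemma eq_connect_adj X Y : X =i Y -> connect (adj X) =2 connect (adj Y).
Proof.
by move=> XY u v; apply/idP/idP; apply: sub_connect_adj => e; rewrite XY.
Qed.

Lemma connect_VX X u v : u \in VX X -> connect (adj X) u v -> v \in VX X.
Proof.
move=> uX /connectP [p pth ->] {v}.
elim: p u uX pth => [|y p IH] u //= uX /andP [/adjP [e eX j] pth]; apply: IH pth.
by rewrite joins_sym in j; rewrite inVX; apply/hasP; exists e; last exact: joins_incident j.
Qed.

Lemma not_connects D X :
  ~ connects D X -> exists a b, [/\ a \in D, b \in D & ~~ connect (adj X) a b].
Proof.
move=> nc; have /forallPn [a /forallPn [b]] :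
    ~~ [forall a, forall b, [==> a \in D, b \in D => connect (adj X) a b]].
  by apply/negP => /forallP hc; apply: nc => a b aD bD; have /forallP/(_ b) := hc a; rewrite aD bD.
by rewrite !negb_imply => /and3P [aD bD nab]; exists a, b.
Qed.

(** * Cuts *)

Definition cross (K : {set V}) (e : E) : bool :=
  ((ends e).1 \in K) != ((ends e).2 \in K).

Lemma cross_joins (K : {set V}) e u v : joins e u v -> cross K e = ((u \in K) != (v \in K)).
Proof. by rewrite /cross; case/joinsP => -[-> ->]; rewrite // eq_sym. Qed.

Lemma sum_eq_mem (a : V) (K : {set V}) : \sum_(y in K) (a == y : nat) = (a \in K).
Proof.
case: (boolP (a \in K)) => aK.
  by rewrite (bigD1 a) //= eqxx big1 // => y /andP [_]; rewrite eq_sym => /negbTE ->.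
by rewrite big1 // => y yK; case: eqP => // ay; rewrite ay yK in aK.
Qed.

(* Summing degrees over [K] counts each crossing edge of [K] once and every other edge
   touching [K] twice. *)
Lemma even_count_cross X (K : {set V}) : even_graph X -> ~~ odd (count (cross K) X).
Proof.
move=> ev.
have evK : ~~ odd (\sum_(y in K) deg X y).
  apply: (big_ind (fun n => ~~ odd n)) => // [m n hm hn | y _]; last exact: ev.
  by rewrite oddD (negbTE hm) (negbTE hn).
suff -> : odd (count (cross K) X) = odd (\sum_(y in K) deg X y) by [].
rewrite /Defs.deg exchange_big /=.
under eq_bigr => e _ do rewrite big_split /= !sum_eq_mem.
elim: X {ev evK} => [|e X IH]; first by rewrite big_nil.
by rewrite big_cons /= !oddD IH /cross; case: (_ \in K); case: (_ \in K).
Qed.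

Lemma connect_has_cross X (K : {set V}) a b :
  connect (adj X) a b -> a \in K -> b \notin K -> has (cross K) X.
Proof.
move/connectP => [p pth ->] {b}.
elim: p a pth => [|y p IH] a /=; first by move=> _ ->.
case/andP => /adjP [e eX j] pth aK; case: (boolP (y \in K)) => yK; first exact: IH.
move=> _; apply/hasP; exists e => //.
by rewrite (cross_joins _ j) aK (negbTE yK).
Qed.

Lemma count_cross_gt1 X Y (K : {set V}) a b : even_graph (X ++ Y) -> count (cross K) X = 0 ->
  connect (adj (X ++ Y)) a b -> a \in K -> b \notin K -> 1 < count (cross K) Y.
Proof.
move=> ev X0 ab aK bK; move: (even_count_cross K ev) (connect_has_cross ab aK bK).
by rewrite has_count count_cat X0; case: (count _ Y) => [|[]].
Qed.

Lemma component_cross X a e :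
  e \in X -> ~~ cross [set y | connect (adj X) a y] e.
Proof.
move=> eX; rewrite /cross !inE negbK; apply/eqP.
have j := joins_ends e; have j' := j; rewrite joins_sym in j'.
apply/idP/idP => h; apply: connect_trans h _; apply: connect1.
  exact: adj_edge j.
exact: adj_edge j'.
Qed.

(** * Improving an Eulerian extension *)

(* Only the part of [S1] reachable from [V(R)] is kept; it is a union of components, so
   degrees stay even. *)
Lemma even_connects_eulerian R S1 : even_graph (R ++ S1) -> connects (VX R) (R ++ S1) ->
  exists2 S', eulerian (R ++ S') & size S' <= size S1 /\ weight S' <= weight S1.
Proof.
move=> ev conn; set X := R ++ S1.
pose good y := [exists r, (r \in VX R) && connect (adj X) y r].
pose S' := filter (fun e => good (ends e).1) S1.
have eX e : e \in S1 -> e \in X by rewrite mem_cat orbC => ->.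
have good_adj x y : good x -> adj X x y -> good y.
  move=> /existsP [r /andP [rR c]] xy; apply/existsP; exists r; rewrite rR /=.
  by apply: connect_trans c; apply: connect1; rewrite adj_sym.
have good_ends e y : e \in S1 -> incident e y -> good y -> good (ends e).1.
  move=> eS /orP [/eqP -> // | /eqP ey] gy; apply: (good_adj y) => //.
  by rewrite -ey adj_sym; apply: adj_edge (eX _ eS) (joins_ends _).
have good_VX y : y \in VX (R ++ S') -> good y.
  rewrite inVX has_cat => /orP [yR | /hasP [e]].
    by apply/existsP; exists y; rewrite inVX yR connect0.
  rewrite mem_filter => /andP [ge eS] /orP [/eqP <- // | /eqP <-].
  by apply: (good_adj _ _ ge); apply: adj_edge (eX _ eS) (joins_ends _).
have good_connect x y : good x -> connect (adj X) x y -> connect (adj (R ++ S')) x y.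
  move=> gx /connectP [p pth ->] {y}.
  elim: p x gx pth => [|y p IH] x gx /=; first by rewrite connect0.
  case/andP => xy pth; apply: connect_trans (IH y (good_adj _ _ gx xy) pth).
  apply: connect1; case/adjP: xy => e + j; rewrite mem_cat => /orP [eR | eS].
    by apply: adj_edge j; rewrite mem_cat eR.
  have ge := good_ends e x eS (joins_incident j) gx.
  by apply: adj_edge j; rewrite mem_cat mem_filter eS ge orbT.
exists S'; last by rewrite size_filter count_size weight_filter.
split.
  move=> u v /good_VX gu /good_VX gv; apply: good_connect => //.
  case/existsP: gu => ru /andP [ruR cu]; case/existsP: gv => rv /andP [rvR cv].
  by apply: connect_trans cu _; apply: connect_trans (conn _ _ ruR rvR) _; rewrite connect_adj_sym.
move=> v /good_VX gv; rewrite /Defs.balanced deg_cat deg_filter -?deg_cat; first exact: ev.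
by move=> e eS ng; apply/negP => inc; rewrite (good_ends _ _ eS inc gv) in ng.
Qed.

Lemma edge_minimizing_disconnects R S S1 : edge_minimizing ends w R S ->
  size S1 < size S -> weight S1 <= weight S -> even_graph (R ++ S1) ->
  ~ connects (VX R) (R ++ S1).
Proof.
move=> [_ hmin] hs hw ev conn; have [S' eul [s' w']] := even_connects_eulerian ev conn.
by apply: hmin; exists S'; split; [|split]; [| exact: leq_ltn_trans hs | exact: leq_trans hw].
Qed.

Lemma even_graph_double_diff R S S1 (m : V -> nat) :
  (forall y, deg S y = deg S1 y + (m y).*2) -> even_graph (R ++ S) -> even_graph (R ++ S1).
Proof.
move=> h ev y; have := ev y.
by rewrite /Defs.balanced !deg_cat h addnA oddD odd_double addbF.
Qed.

Lemma sub_filter_rem2 S e1 e2 z : incident e1 z -> incident e2 z ->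
  {subset [seq f <- S | ~~ incident f z] <= rem e2 (rem e1 S)}.
Proof.
move=> i1 i2 x; rewrite mem_filter => /andP [nx xS].
have off e : incident e z -> x != e by move=> ie; apply: contraNneq nx => ->.
exact: rem_mem (off _ i2) (rem_mem (off _ i1) xS).
Qed.

(* Replace the path [u1 - v - u2] formed by [e1] and [e2] by the direct edge [u1 - u2]
   (or by nothing if [u1 = u2]); the triangle inequality pays for it. *)
Lemma pair_shortcut R S e1 e2 v u1 u2 : metric ends w ->
  e1 \in S -> e2 \in rem e1 S -> joins e1 v u1 -> joins e2 v u2 -> even_graph (R ++ S) ->
  exists S1, [/\ size S1 < size S, weight S1 <= weight S, even_graph (R ++ S1),
    {subset rem e2 (rem e1 S) <= S1} &
    u1 != u2 -> exists2 f, f \in S1 & joins f u1 u2].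
Proof.
move=> [hm1 hm2] e1S e2S j1 j2 ev; set S0 := rem e2 (rem e1 S).
have hp : perm_eq S [:: e1, e2 & S0].
  by apply: perm_trans (perm_to_rem e1S) _; rewrite perm_cons; exact: perm_to_rem e2S.
have hsz := perm_size hp; have hw := weight_perm hp; have hd y := deg_perm y hp.
rewrite !weight_cons in hw.
have deg2 y : deg [:: e1, e2 & S0] y = (v == y).*2 + (u1 == y) + (u2 == y) + deg S0 y.
  by rewrite -(cat1s e1) -(cat1s e2) !deg_cat (deg_seq1 y j1) (deg_seq1 y j2); lia.
case: (eqVneq u1 u2) => [u12 | hu].
- exists S0; split => //; first by rewrite hsz.
  + by rewrite hw addnA leq_addl.
  + apply: (even_graph_double_diff (m := fun y => (v == y) + (u1 == y))) ev => y.
    by rewrite hd deg2 -u12 doubleD -!addnn; lia.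
- have [f jf] := hm1 u1 u2 hu.
  have wf : w f <= w e1 + w e2 by apply: (hm2 u1 v u2) => //; rewrite joins_sym.
  exists (f :: S0); split => //; first by rewrite hsz.
  + by rewrite weight_cons hw addnA leq_add2r.
  + apply: (even_graph_double_diff (m := fun y => (v == y) : nat)) ev => y.
    by rewrite hd deg2 -cat1s deg_cat (deg_seq1 y jf); lia.
  + by move=> x xS; rewrite inE xS orbT.
  + by move=> _; exists f; rewrite ?mem_head.
Qed.

Lemma vertex_shortcut R S v : metric ends w ->
  v \in VX S -> balanced S v -> even_graph (R ++ S) ->
  exists S1, [/\ size S1 < size S, weight S1 <= weight S, even_graph (R ++ S1) &
    {subset [seq e <- S | ~~ incident e v] <= S1}].
Proof.
move=> hm vS dv ev.
case: (boolP (has (fun e => joins e v v) S)) => [/hasP [e1 e1S j1] | nloop].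
  have hp := perm_to_rem e1S; have hw := weight_perm hp; rewrite weight_cons in hw.
  have i1 := joins_incident j1.
  exists (rem e1 S); split.
  - by rewrite (perm_size hp).
  - by rewrite hw leq_addl.
  - apply: (even_graph_double_diff (m := fun y => (v == y) : nat)) ev => y.
    by rewrite (deg_perm y hp) -cat1s deg_cat (deg_seq1 y j1) -addnn addnC.
  - by move=> x /(sub_filter_rem2 i1 i1) /mem_rem.
move: vS; rewrite inVX => /hasP [e1 e1S /incident_joins [u1 j1]].
have u1v : u1 != v by apply: contraNneq nloop => u1v; apply/hasP; exists e1; rewrite // -{2}u1v.
have hp := perm_to_rem e1S.
have : 0 < deg (rem e1 S) v.
  move: dv; rewrite /Defs.balanced (deg_perm v hp) -cat1s deg_cat (deg_seq1 v j1) eqxx.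
  by rewrite (negbTE u1v); case: (deg _ v).
rewrite deg_gt0 inVX => /hasP [e2 e2S /incident_joins [u2 j2]].
have [S1 [h1 h2 h3 h4 _]] := pair_shortcut hm e1S e2S j1 j2 ev.
exists S1; split => // x /(sub_filter_rem2 (joins_incident j1) (joins_incident j2)).
exact: h4.
Qed.

Lemma shortcut_disconnects R S v : metric ends w -> edge_minimizing ends w R S ->
  v \in VX S -> balanced S v -> ~ connects (VX R) (R ++ [seq e <- S | ~~ incident e v]).
Proof.
move=> hm hmin vS dv conn.
have [S1 [h1 h2 h3 h4]] := vertex_shortcut hm vS dv (eulerian_even hmin.1).
apply: (edge_minimizing_disconnects hmin h1 h2 h3) => a b aR bR.
apply: sub_connect_adj (conn a b aR bR) => x; rewrite !mem_cat => /orP [-> // | /h4 ->].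
by rewrite orbT.
Qed.

Section Steiner.
Variables (R S : seq E) (z : V).
Hypotheses (hm : metric ends w) (hmin : edge_minimizing ends w R S) (zR : z \notin VX R).

Local Notation G0 := (R ++ [seq e <- S | ~~ incident e z]).
Local Notation comp r := [set y | connect (adj G0) r y].

Lemma steiner_cross r e : r \in VX R -> e \in R ++ S -> cross (comp r) e ->
  e \in S /\ exists2 u, connect (adj G0) r u & joins e z u.
Proof.
move=> rR eX ce.
have zG0 : z \notin VX G0.
  rewrite inVX has_cat -inVX (negbTE zR) /=.
  by apply/hasP => -[f]; rewrite mem_filter => /andP [/negbTE ->].
have nG0 : e \notin G0 by apply: contraL ce => eG0; exact: component_cross.
have eS : e \in S by move: eX nG0; rewrite !mem_cat => /orP [-> | ->].
have /incident_joins [u j] : incident e z.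
  by apply: contraR nG0 => nz; rewrite mem_cat mem_filter nz eS orbT.
have rz : connect (adj G0) r z = false.
  by apply: contraNF zG0; apply: connect_VX; apply: VX_catl.
by split => //; exists u => //; move: ce; rewrite (cross_joins _ j) !inE rz; case: connect.
Qed.

Lemma steiner_separated r : r \in VX R -> ~ connects (VX R) G0 ->
  exists2 c, c \in VX R & ~~ connect (adj G0) r c.
Proof.
move=> rR /not_connects [a [b [aR bR nab]]].
case: (boolP (connect (adj G0) r a)) => ra; last by exists a.
exists b => //; apply: contra nab; apply: connect_trans; by rewrite connect_adj_sym.
Qed.

Lemma steiner_reach r : r \in VX R -> ~ connects (VX R) G0 ->
  exists e u, [/\ e \in S, joins e z u & connect (adj G0) r u].
Proof.
move=> rR /(steiner_separated rR) [c cR nrc].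
have rc : connect (adj (R ++ S)) r c by apply: hmin.1.1; apply: VX_catl.
have rK : r \in comp r by rewrite inE connect0.
have cK : c \notin comp r by rewrite inE.
have /hasP [e eX ce] := connect_has_cross rc rK cK.
have [eS [u ru j]] := steiner_cross rR eX ce.
by exists e, u.
Qed.

Lemma steiner_two_edges a : a \in VX R -> ~ connects (VX R) G0 ->
  exists e1 u1, [/\ e1 \in S, joins e1 z u1 & connect (adj G0) a u1] /\
  exists e2 u2, [/\ e2 \in rem e1 S, joins e2 z u2 & connect (adj G0) a u2].
Proof.
move=> aR /(steiner_separated aR) [c cR nac].
have R0 : count (cross (comp a)) R = 0.
  apply/eqP; rewrite -leqn0 leqNgt -has_count; apply/hasP => -[e eR].
  by apply/negP; apply: component_cross; rewrite mem_cat eR.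
have ac : connect (adj (R ++ S)) a c by apply: hmin.1.1; apply: VX_catl.
have aK : a \in comp a by rewrite inE connect0.
have cK : c \notin comp a by rewrite inE.
have two := count_cross_gt1 (eulerian_even hmin.1) R0 ac aK cK.
have [e1 e1S ce1] : exists2 e1, e1 \in S & cross (comp a) e1.
  by apply/hasP; rewrite has_count ltnW.
have [e2 e2S ce2] : exists2 e2, e2 \in rem e1 S & cross (comp a) e2.
  by apply/hasP; rewrite has_count; move: two; rewrite (permP (perm_to_rem e1S)) /= ce1.
have inRS e : e \in S -> e \in R ++ S by rewrite mem_cat orbC => ->.
have [_ [u1 au1 j1]] := steiner_cross aR (inRS _ e1S) ce1.
have [_ [u2 au2 j2]] := steiner_cross aR (inRS _ (mem_rem e2S)) ce2.
by exists e1, u1; split; last exists e2, u2.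
Qed.

Lemma steiner_reconnect S1 a : ~ connects (VX R) G0 -> {subset G0 <= R ++ S1} ->
  (forall e u, e \in S -> joins e z u -> connect (adj (R ++ S1)) u a) ->
  connects (VX R) (R ++ S1).
Proof.
move=> disc G0S1 reach.
have toa r : r \in VX R -> connect (adj (R ++ S1)) r a.
  move=> rR; have [e [u [eS j ru]]] := steiner_reach rR disc.
  exact: connect_trans (sub_connect_adj G0S1 ru) (reach e u eS j).
by move=> r r' rR r'R; apply: connect_trans (toa r rR) _; rewrite connect_adj_sym; apply: toa.
Qed.

(* Two [S]-edges [e1], [e3] from [z] into different components of [G0] are shortcut; a third
   edge [e2] from [z] into the component of [e1] keeps [z] attached, so connectivity survives. *)
Lemma steiner_untouched : z \notin VX S.
Proof.
apply/negP => zS; have ev := eulerian_even hmin.1.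
have dz : balanced S z by have := ev z; rewrite /Defs.balanced deg_cat deg_notVX.
have disc := shortcut_disconnects hm hmin zS dz.
have [a [b [aR bR nab]]] := not_connects disc.
have [e1 [u1 [[e1S j1 au1] [e2 [u2 [e2S j2 au2]]]]]] := steiner_two_edges aR disc.
have [e3 [u3 [e3S j3 bu3]]] := steiner_reach bR disc.
have apart x y : connect (adj G0) a x -> connect (adj G0) b y -> x != y.
  move=> ax bY; apply: contraNneq nab => xy.
  by apply: connect_trans ax _; rewrite xy connect_adj_sym.
have e31 : e3 != e1.
  apply: contraTneq (apart _ _ au1 bu3) => e31.
  by rewrite e31 in j3; rewrite (joins_inj j1 j3) eqxx.
have e23 : e2 != e3.
  apply: contraTneq (apart _ _ au2 bu3) => e23.
  by rewrite e23 in j2; rewrite (joins_inj j2 j3) eqxx.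
have [S1 [hs hw ev1 sub short]] := pair_shortcut hm e1S (rem_mem e31 e3S) j1 j3 ev.
have [f fS1 jf] := short (apart _ _ au1 bu3).
set Y := R ++ S1.
have SY e : e \in S1 -> e \in Y by rewrite mem_cat orbC => ->.
have G0Y : {subset G0 <= Y}.
  move=> x; rewrite !mem_cat => /orP [-> // | /(sub_filter_rem2 (joins_incident j1))].
  by move=> /(_ _ (joins_incident j3)) /sub ->; rewrite orbT.
have u1a : connect (adj Y) u1 a by apply: sub_connect_adj G0Y _ _ _; rewrite connect_adj_sym.
have za : connect (adj Y) z a.
  apply: (@connect_trans _ _ u2).
    by apply: connect1; apply: adj_edge (SY _ (sub _ (rem_mem e23 e2S))) j2.
  by apply: sub_connect_adj G0Y _ _ _; rewrite connect_adj_sym.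
have reach e u : e \in S -> joins e z u -> connect (adj Y) u a.
  move=> eS j; case: (eqVneq e e1) => [ee1 | ne1].
    by rewrite ee1 in j; rewrite (joins_inj j j1).
  case: (eqVneq e e3) => [ee3 | ne3].
    rewrite ee3 in j; rewrite (joins_inj j j3); apply: connect_trans u1a.
    by apply: connect1; rewrite adj_sym; apply: adj_edge (SY _ fS1) jf.
  apply: connect_trans za; apply: connect1; rewrite adj_sym.
  exact: adj_edge (SY _ (sub _ (rem_mem ne3 (rem_mem ne1 eS)))) j.
exact: (edge_minimizing_disconnects hmin hs hw ev1) (steiner_reconnect disc G0Y reach).
Qed.

End Steiner.

Lemma edge_minimizing_VX R S : metric ends w -> edge_minimizing ends w R S ->
  {subset VX S <= VX R}.
Proof. by move=> hm hmin z; apply: contraTT => zR; exact: steiner_untouched hm hmin zR. Qed.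

Definition comp_in (D : {set V}) X x := [set y in D | connect (adj X) x y].

Definition ncomp_in (D : {set V}) X := #|[set comp_in D X x | x in D]|.

Lemma eq_ncomp_in D X Y : connect (adj X) =2 connect (adj Y) -> ncomp_in D X = ncomp_in D Y.
Proof.
move=> XY; rewrite /ncomp_in (@eq_in_imset _ _ (comp_in D X) (comp_in D Y)) // => x _.
by apply/setP => y; rewrite !inE XY.
Qed.

Lemma ncomp_in_gt0 D X : D != set0 -> 0 < ncomp_in D X.
Proof. by case/set0Pn => x xD; apply/card_gt0P; exists (comp_in D X x); apply: imset_f. Qed.

Lemma connect_adj_cons_redundant X e : connect (adj X) (ends e).1 (ends e).2 ->
  connect (adj (e :: X)) =2 connect (adj X).
Proof.
move=> h u v; apply/idP/idP; last by apply: sub_connect_adj => x xX; rewrite inE xX orbT.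
apply: connect_sub => x y /adjP [f]; rewrite inE => /orP [/eqP -> j | fX j].
  by case/joinsP: j => -[<- <-] //; rewrite connect_adj_sym.
exact/connect1/(adj_edge fX j).
Qed.

Lemma eq_connect_adj_cons X Y e : connect (adj X) =2 connect (adj Y) ->
  connect (adj (e :: X)) =2 connect (adj (e :: Y)).
Proof.
have sub X1 Y1 : connect (adj X1) =2 connect (adj Y1) ->
    subrel (connect (adj (e :: X1))) (connect (adj (e :: Y1))).
  move=> XY; apply: connect_sub => x y /adjP [f]; rewrite inE => /orP [/eqP -> j | fX j].
    by apply: connect1; apply: adj_edge j; rewrite mem_head.
  have : connect (adj X1) x y by apply: connect1; apply: adj_edge fX j.
  by rewrite XY; apply: sub_connect_adj => g gY; rewrite inE gY orbT.
by move=> XY u v; apply/idP/idP; apply: sub => // x y; rewrite XY.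
Qed.

(* [g] sends each class of [X] to the class of [e :: X] containing it; it identifies the
   classes of the two ends of [e]. *)
Lemma ncomp_in_cons_lt (D : {set V}) X e : (ends e).1 \in D -> (ends e).2 \in D ->
  ~~ connect (adj X) (ends e).1 (ends e).2 -> ncomp_in D (e :: X) < ncomp_in D X.
Proof.
set a := (ends e).1; set b := (ends e).2 => aD bD nab.
pose g (C : {set V}) := [set y in D | [exists x in C, connect (adj (e :: X)) x y]].
have hg : {in D, forall x, g (comp_in D X x) = comp_in D (e :: X) x}.
  move=> x xD; apply/setP => y; rewrite !inE; congr (_ && _); apply/existsP/idP.
    move=> [x' /andP [/[!inE] /andP [_ xx'] x'y]]; apply: connect_trans x'y.
    by apply: sub_connect_adj xx' => f fX; rewrite inE fX orbT.
  by move=> xy; exists x; rewrite !inE xD connect0.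
have -> : ncomp_in D (e :: X) = #|[set g C | C in [set comp_in D X x | x in D]]|.
  rewrite /ncomp_in -imset_comp.
  by rewrite (@eq_in_imset _ _ (comp_in D (e :: X)) (g \o comp_in D X)) // => x xD /=; rewrite hg.
rewrite ltn_neqAle leq_imset_card andbT; apply/negP => /imset_injP inj.
have ab : connect (adj (e :: X)) a b.
  by apply: connect1; apply: adj_edge (joins_ends _); rewrite mem_head.
have gab : g (comp_in D X a) = g (comp_in D X b).
  rewrite !hg //; apply/setP => y; rewrite !inE.
  by rewrite (same_connect (connect_adj_sym _) ab).
move: (inj _ _ (imset_f _ aD) (imset_f _ bD) gab) => /setP /(_ b).
by rewrite !inE bD connect0 /= (negbTE nab).
Qed.

Lemma spanning_forest R0 (D : {set V}) S :
  {in S, forall e, ((ends e).1 \in D) && ((ends e).2 \in D)} ->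
  exists T, [/\ {subset T <= S}, connect (adj (R0 ++ T)) =2 connect (adj (R0 ++ S))
            & size T + ncomp_in D (R0 ++ S) <= ncomp_in D R0].
Proof.
elim: S => [|e S IH] hS; first by exists [::]; split => //; rewrite cats0.
have [|T [TS Tc Tn]] := IH; first by move=> f fS; apply: hS; rewrite inE fS orbT.
have mc Z : connect (adj (R0 ++ e :: Z)) =2 connect (adj (e :: R0 ++ Z)).
  by apply: eq_connect_adj => x; rewrite !(mem_cat, inE) orbCA.
case/andP: (hS e (mem_head _ _)) => aD bD.
case: (boolP (connect (adj (R0 ++ S)) (ends e).1 (ends e).2)) => hc.
  exists T; split.
  - by move=> x xT; rewrite inE TS ?orbT.
  - by move=> x y; rewrite mc connect_adj_cons_redundant.
  - by rewrite (eq_ncomp_in D (mc S)) (eq_ncomp_in D (connect_adj_cons_redundant hc)).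
exists (e :: T); split.
- by move=> x; rewrite !inE => /orP [-> | /TS ->]; rewrite ?orbT.
- by move=> x y; rewrite !mc; apply: eq_connect_adj_cons.
- by rewrite (eq_ncomp_in D (mc S)) /=; have := ncomp_in_cons_lt aD bD hc; lia.
Qed.

Lemma balanced_touched_sub R S T : metric ends w -> edge_minimizing ends w R S ->
  {subset T <= S} -> connect (adj (R ++ T)) =2 connect (adj (R ++ S)) ->
  balanced_touched ends R S \subset VX T.
Proof.
move=> hm hmin TS Tc; apply/subsetP => v; rewrite !inE -!inVX => /and3P [vR bv vS].
have dv : balanced S v.
  by have := eulerian_even hmin.1 v; rewrite /Defs.balanced deg_cat oddD (negbTE bv).
apply/negPn/negP => vT; apply: (shortcut_disconnects hm hmin vS dv) => a b aR bR.
have : connect (adj (R ++ T)) a b by rewrite Tc; apply: hmin.1.1; apply: VX_catl.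
apply: sub_connect_adj => x; rewrite !mem_cat => /orP [-> // | xT].
rewrite mem_filter TS // andbT orbC; apply/orP; left.
by apply: contra vT => xv; rewrite inVX; apply/hasP; exists x.
Qed.

Theorem card_balanced_touched R S : R != [::] -> metric ends w -> edge_minimizing ends w R S ->
  #|balanced_touched ends R S| <= 2 * ncomp ends R - 2.
Proof.
move=> hR hm hmin.
have endsR : {in S, forall e, ((ends e).1 \in VX R) && ((ends e).2 \in VX R)}.
  move=> e eS; apply/andP; split; apply: (edge_minimizing_VX hm hmin); rewrite inVX;
  by apply/hasP; exists e; rewrite // /Defs.incident eqxx ?orbT.
have [T [TS Tc Tn]] := spanning_forest R endsR.
have RS_gt0 : 0 < ncomp_in (VX R) (R ++ S).
  apply: ncomp_in_gt0; case: R hR {hmin endsR Tc Tn} => [// | e R] _.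
  by apply/set0Pn; exists (ends e).1; rewrite inVX /= /Defs.incident eqxx.
have := subset_leq_card (balanced_touched_sub hm hmin TS Tc); have := card_VX T.
have -> : ncomp ends R = ncomp_in (VX R) R by [].
lia.
Qed.

End Multigraph.

(** * A tight example *)

Lemma sum_count_le (T : eqType) (P : nat -> pred T) (f : T -> nat) s n :
  {in s, forall x k, P k x -> k = f x} -> \sum_(k < n) count (P k) s <= size s.
Proof.
elim: s => [|x s IH] sP /=; first by rewrite big1.
rewrite big_split /= -add1n leq_add ?IH //; last by move=> y ys; apply: sP; rewrite inE ys orbT.
have Px k : P k x -> k = f x by apply: sP; rewrite mem_head.
case: (ltnP (f x) n) => [lt_n | ge_n].
  rewrite (bigD1 (Ordinal lt_n)) //= big1 ?addn0 ?leq_b1 // => k.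
  by rewrite -val_eqE /=; case: (boolP (P k x)) => // /Px ->; rewrite eqxx.
rewrite big1 // => k _; case: (boolP (P k x)) => // /Px fk.
by move: (ltn_ord k); rewrite fk ltnNge ge_n.
Qed.

(* The vertex [(i, b)] sits at position [i + b] of a line and edges are weighted by the
   distance there: [R] doubles the unit rungs [(i, false) - (i, true)], [S] doubles the
   weight-zero links [(i, true) - (i + 1, false)]. *)
Section Ladder.
Variable n : nat.

Definition ladderV : finType := ('I_n.+1 * bool)%type.
Definition ladderE : eqType := (ladderV * ladderV)%type.
Definition ladder_ends : ladderE -> ladderV * ladderV := id.
Definition ladder_pos (v : ladderV) : nat := v.1 + v.2.
Definition ladder_w (e : ladderE) : nat :=
  (ladder_pos e.1 - ladder_pos e.2) + (ladder_pos e.2 - ladder_pos e.1).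

Definition rung (i : 'I_n.+1) : ladderE := ((i, false), (i, true)).
Definition link (i : 'I_n) : ladderE := ((widen_ord (leqnSn n) i, true), (lift ord0 i, false)).
Definition rungs : seq ladderE := map rung (enum 'I_n.+1).
Definition links : seq ladderE := map link (enum 'I_n).
Definition ladderR : seq ladderE := rungs ++ rungs.
Definition ladderS : seq ladderE := links ++ links.

Local Notation joins := (joins ladder_ends).
Local Notation adj := (adj ladder_ends).
Local Notation VX := (VX ladder_ends).

Lemma ladder_joins e u v : joins e u v = (e == (u, v)) || (e == (v, u)).
Proof. by []. Qed.

Lemma ladder_parallel : parallel_eq_weight ladder_ends ladder_w.
Proof.
by move=> e [a b]; rewrite ladder_joins => /orP [] /eqP ->; rewrite /ladder_w /=; lia.
Qed.

Lemma ladder_metric : metric ladder_ends ladder_w.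
Proof.
split=> [u v _ | u v x e1 e2 e3]; first by exists (u, v); rewrite ladder_joins eqxx.
rewrite !ladder_joins => /orP [] /eqP -> /orP [] /eqP -> /orP [] /eqP ->;
by rewrite /ladder_w /=; lia.
Qed.

Lemma rung_in i : rung i \in ladderR.
Proof. by rewrite mem_cat orbb; apply: map_f; rewrite mem_enum. Qed.

Lemma link_in i : link i \in ladderS.
Proof. by rewrite mem_cat orbb; apply: map_f; rewrite mem_enum. Qed.

Lemma ladderRP e : e \in ladderR -> exists i, e = rung i.
Proof. by rewrite mem_cat orbb => /mapP [i _ ->]; exists i. Qed.

Lemma connect_ladderR u v : connect (adj ladderR) u v = (u.1 == v.1).
Proof.
have adjR x y : adj ladderR x y = (x.1 == y.1) && (x.2 != y.2).
  apply/idP/idP => [/adjP [e /ladderRP [i ->]] | /andP [/eqP x1 x2]].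
    by rewrite ladder_joins /rung => /orP [] /eqP /pair_equal_spec [<- <-] /=; rewrite eqxx.
  apply/adjP; exists (rung x.1); first exact: rung_in.
  move: x y x1 x2 => [i b] [j c] /= <-.
  by case: b; case: c; rewrite ladder_joins /rung ?eqxx ?orbT.
apply/idP/idP => [/connectP [p pth ->] | uv].
  elim: p u pth => [|y p IH] u /=; first by rewrite eqxx.
  by case/andP => /[!adjR] /andP [/eqP -> _] /IH.
case: (eqVneq u.2 v.2) => u2; last by apply: connect1; rewrite adjR uv u2.
by move: u v uv u2 => [i b] [j c] /= /eqP -> ->.
Qed.

Lemma VX_ladderR v : v \in VX ladderR.
Proof.
rewrite inVX; apply/hasP; exists (rung v.1); first exact: rung_in.
by case: v => i []; rewrite /Defs.incident /= eqxx ?orbT.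
Qed.

Lemma ncomp_ladderR : ncomp ladder_ends ladderR = n.+1.
Proof.
rewrite /ncomp; pose F (i : 'I_n.+1) := [set y : ladderV | y.1 == i].
have -> : [set [set y in VX ladderR | connect (adj ladderR) x y] | x in VX ladderR] =
          [set F i | i in [set: 'I_n.+1]].
  apply/setP => C; apply/imsetP/imsetP => -[x _ ->].
    by exists x.1; rewrite ?inE //; apply/setP => y; rewrite !inE -inVX VX_ladderR connect_ladderR.
  exists (x, false); first exact: VX_ladderR.
  by apply/setP => y; rewrite !inE -inVX VX_ladderR connect_ladderR eq_sym.
have injF : injective F by move=> i j /setP /(_ (i, false)); rewrite !inE eqxx => /esym /eqP.
by rewrite (card_imset _ injF) cardsT card_ord.
Qed.

Lemma connect_ladder X u v : {subset ladderS <= X} -> connect (adj (ladderR ++ X)) u v.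
Proof.
move=> SX.
have cR x y : x.1 = y.1 -> connect (adj (ladderR ++ X)) x y.
  move=> xy; have : connect (adj ladderR) x y by rewrite connect_ladderR xy.
  by apply: sub_connect_adj => e; rewrite mem_cat => ->.
suff to0 k (x : ladderV) : x.1 = k :> nat -> connect (adj (ladderR ++ X)) x (ord0, false).
  by apply: connect_trans (to0 _ u erefl) _; rewrite connect_adj_sym; exact: to0.
elim: k x => [|k IH] x xk; first by apply: cR; apply: val_inj.
have lt_kn : k < n by rewrite -ltnS -xk.
apply: (@connect_trans _ _ (lift ord0 (Ordinal lt_kn), false)); first by apply: cR; apply: val_inj.
apply: (@connect_trans _ _ (widen_ord (leqnSn n) (Ordinal lt_kn), true)); last exact: IH.
apply: connect1; apply/adjP; exists (link (Ordinal lt_kn)).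
  by rewrite mem_cat SX ?link_in ?orbT.
by rewrite ladder_joins eqxx orbT.
Qed.

Lemma ladder_eulerian : eulerian ladder_ends (ladderR ++ ladderS).
Proof.
split=> [u v _ _ | v _]; first exact: connect_ladder.
have bR : ~~ odd (deg ladder_ends ladderR v) := balanced_double ladder_ends rungs v.
have bS : ~~ odd (deg ladder_ends ladderS v) := balanced_double ladder_ends links v.
by rewrite /Defs.balanced deg_cat oddD (negbTE bR) (negbTE bS).
Qed.

Lemma weight_ladderS : weight ladder_w ladderS = 0.
Proof.
rewrite /Defs.weight big1_seq // => e /andP [_]; rewrite mem_cat orbb => /mapP [i _ ->].
by rewrite /ladder_w /ladder_pos /= /bump leq0n; lia.
Qed.

Definition cut (k : nat) : {set ladderV} := [set v : ladderV | v.1 <= k].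

Lemma cross_cut_weight0 e k : ladder_w e = 0 -> cross ladder_ends (cut k) e ->
  k = minn e.1.1 e.2.1.
Proof.
rewrite /cross /cut !inE /ladder_w /ladder_pos; case: e => [[a1 a2] [b1 b2]] /= w0.
by case: (leqP a1 k); case: (leqP b1 k) => //= h1 h2; case: a2 b2 w0 => -[] /=; lia.
Qed.

(* A weight-zero extension must cross each of the [n] cuts [cut k] at least twice,
   while each of its edges crosses at most one of them. *)
Lemma ladder_minimizing : edge_minimizing ladder_ends ladder_w ladderR ladderS.
Proof.
split=> [|[S' [eul [short light]]]]; first exact: ladder_eulerian.
rewrite weight_ladderS leqn0 in light; have w0 := weight_eq0 (eqP light).
have twice k : k < n -> 1 < count (cross ladder_ends (cut k)) S'.
  move=> kn; have R0 : count (cross ladder_ends (cut k)) ladderR = 0.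
    apply/eqP; rewrite -leqn0 leqNgt -has_count; apply/hasP => -[e /ladderRP [i ->]].
    by rewrite /cross !inE /= eqxx.
  have VXRS v : v \in VX (ladderR ++ S') by apply/VX_catl/VX_ladderR.
  have := eul.1 (ord0, false) (ord_max, false) (VXRS _) (VXRS _).
  move/(count_cross_gt1 (eulerian_even eul) R0); apply; first by rewrite inE.
  by rewrite inE /= -ltnNge.
have : n.*2 <= size S'.
  apply: leq_trans (sum_count_le (P := fun k => cross ladder_ends (cut k)) n _); last first.
    by move=> e eS k; apply: cross_cut_weight0; apply: w0.
  rewrite -muln2 -{1}(card_ord n) -sum_nat_const; apply: leq_sum => k _; exact: twice.
by move: short; rewrite size_cat size_map size_enum_ord addnn; lia.
Qed.

Lemma VX_links : VX links =
  [set (widen_ord (leqnSn n) i, true) | i : 'I_n] :|: [set (lift ord0 i, false) | i : 'I_n].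
Proof.
apply/setP => v; rewrite inVX inE; apply/hasP/orP => [[e /mapP [i _ ->]] | ].
  by rewrite /Defs.incident /= => /orP [] /eqP <-; [left | right]; apply: imset_f.
case=> /imsetP [i _ ->]; exists (link i); rewrite ?map_f ?mem_enum //.
all: by rewrite /Defs.incident /= eqxx ?orbT.
Qed.

Lemma card_ladder_touched : #|balanced_touched ladder_ends ladderR ladderS| = 2 * n.+1 - 2.
Proof.
have -> : balanced_touched ladder_ends ladderR ladderS = VX links.
  apply/setP => v; rewrite /balanced_touched inE VX_ladderR /ladderS VX_double.
  by rewrite (balanced_double ladder_ends rungs v).
have disj : [disjoint [set (widen_ord (leqnSn n) i, true) | i : 'I_n]
                  & [set (lift ord0 i, false) | i : 'I_n]].
  by apply/pred0P => v; apply/negbTE/andP => -[/imsetP [i _ ->] /imsetP [j _ /pair_equal_spec []]].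
rewrite VX_links; move: disj; rewrite -(leq_card_setU _ _).2 => /eqP ->.
rewrite !card_imset ?card_ord; first lia.
  by move=> i j /pair_equal_spec [/lift_inj].
by move=> i j /pair_equal_spec [/(congr1 val) ij _]; apply: val_inj.
Qed.

End Ladder.

Theorem ladder_tight c : 1 <= c ->
  exists (V : finType) (E : eqType) (ends : E -> V * V) (w : E -> nat) (R S : seq E),
    [/\ R != [::], parallel_eq_weight ends w, metric ends w, ncomp ends R = c &
        edge_minimizing ends w R S /\ #|balanced_touched ends R S| = 2 * c - 2].
Proof.
case: c => [// | n] _.
exists (ladderV n), (ladderE n), (@ladder_ends n), (@ladder_w n), (ladderR n), (ladderS n).
split; [ | exact: ladder_parallel | exact: ladder_metric | exact: ncomp_ladderR | ].
  by apply: contraTneq (rung_in (@ord0 n)) => ->.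
by split; [exact: ladder_minimizing | exact: card_ladder_touched].
Qed.

Theorem mainTheorem6 :
  (forall (V : finType) (E : eqType) (ends : E -> V * V) (w : E -> nat)
          (R : seq E),
      R != [::] -> parallel_eq_weight ends w -> metric ends w ->
      forall S : seq E, edge_minimizing ends w R S ->
      #|balanced_touched ends R S| <= 2 * ncomp ends R - 2) /\
  (forall c : nat, 1 <= c ->
     exists (V : finType) (E : eqType) (ends : E -> V * V) (w : E -> nat)
            (R S : seq E),
       [/\ R != [::], parallel_eq_weight ends w, metric ends w,
           ncomp ends R = c &
           edge_minimizing ends w R S /\
           #|balanced_touched ends R S| = 2 * c - 2]).
Proof.
split; last exact: ladder_tight.
by move=> V E ends w R hR _ hm S; apply: card_balanced_touched.
Qed.
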